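(* Let $U\subset\mathbb{R}^d$ be a $k$-dimensional linear subspace, let $P=\{p_1,\dots,p_n\}\subset U$, and let $\alpha>0$. Let $\tilde P=\{\tilde p_i=p_i+t_i\}$, where $t_i\in\mathbb{R}^d$ are arbitrary vectors with $\|t_i\|\le\alpha$. Run the following procedure. Set $j\gets0$ and $\tilde P_0\gets\tilde P$. While $\tilde P_j\neq\emptyset$: - let $\tilde U_j$ be the $k$-dimensional PCA subspace of $\tilde P_j$; - let $M_j=\{\tilde p\in\tilde P_j : \mathrm{dist}(\tilde p,\tilde U_j)\le\sqrt2\,\alpha\}$; - set $\tilde P_{j+1}\gets\tilde P_j\setminus M_j$ and $j\gets j+1$. Then this procedure terminates within $O(\log n)$ iterations.
   Context: For a finite point set $S\subset\mathbb{R}^d$, a $k$-dimensional PCA subspace of $S$ is a $k$-dimensional linear subspace $W$ minimizing $\sum_{x\in S}\mathrm{dist}(x,W)^2$ among all $k$-dimensional linear subspaces; ties are broken arbitrarily. Here $\mathrm{dist}(x,W)=\inf_{y\in W}\|x-y\|$ is the Euclidean distance. *)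

From HB Require Import structures.
From mathcomp Require Import all_boot all_order all_algebra.
From mathcomp Require Import finmap.
From mathcomp Require Import reals.
Set Implicit Arguments. Unset Strict Implicit. Unset Printing Implicit Defensive.
Import Order.TTheory GRing.Theory Num.Theory.
Local Open Scope ring_scope.
Local Open Scope fset_scope.

Section PCA.
Variables (R : realType) (d : nat).

Definition enorm (x : 'rV[R]_d) : R := Num.sqrt (\sum_(i < d) x ord0 i ^+ 2).

Definition dist (x : 'rV[R]_d) (W : {vspace 'rV[R]_d}) : R :=
  inf (fun r : R => exists y, y \in W /\ r = enorm (x - y)).

Definition pca_cost (S : {fset 'rV[R]_d}) (W : {vspace 'rV[R]_d}) : R :=
  \sum_(x <- S) dist x W ^+ 2.

Definition is_pca (k : nat) (S : {fset 'rV[R]_d}) (W : {vspace 'rV[R]_d}) : Prop :=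
  \dim W = k /\ forall W' : {vspace 'rV[R]_d}, \dim W' = k -> pca_cost S W <= pca_cost S W'.

(* One run of the procedure (ties in the PCA choice broken arbitrarily):
   S j is \tilde P_j, W j is \tilde U_j. *)
Definition pca_run (k : nat) (alpha : R) (P0 : {fset 'rV[R]_d})
    (S : nat -> {fset 'rV[R]_d}) (W : nat -> {vspace 'rV[R]_d}) : Prop :=
  S 0%N = P0 /\
  forall j : nat, S j != fset0 ->
    is_pca k (S j) (W j) /\
    S j.+1 = [fset x in S j | ~~ (dist x (W j) <= Num.sqrt 2 * alpha)].

End PCA.

From HB Require Import structures.
From mathcomp Require Import all_boot all_order all_algebra.
From mathcomp Require Import finmap.
From mathcomp Require Import reals.
Set Implicit Arguments. Unset Strict Implicit. Unset Printing Implicit Defensive.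
Import Order.TTheory GRing.Theory Num.Theory.
Local Open Scope ring_scope.
Local Open Scope fset_scope.

(* All points start within [alpha] of the k-dimensional subspace U, so the
   optimal PCA cost is at most [#|S| alpha^2]. Every point that survives a
   round is farther than [sqrt 2 alpha] from the PCA subspace and contributes
   more than [2 alpha^2] to its cost, hence at most half of the points survive
   each round, and after [log2 n + 1] rounds none are left. *)

Section PCAHalving.
Variables (R : realType) (d : nat).
Implicit Types (x y : 'rV[R]_d) (S : {fset 'rV[R]_d}) (W : {vspace 'rV[R]_d}).

Lemma enorm_ge0 x : 0 <= enorm x.
Proof. exact: sqrtr_ge0. Qed.

Lemma dist_ge0 x W : 0 <= dist x W.
Proof.
apply: lb_le_inf; first by exists (enorm (x - 0)), 0; rewrite mem0v.
by move=> r [y [_ ->]]; exact: enorm_ge0.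
Qed.

Lemma dist_le_enorm x y W : y \in W -> dist x W <= enorm (x - y).
Proof.
move=> yW; apply: ge_inf; last by exists y.
by exists 0 => r [z [_ ->]]; exact: enorm_ge0.
Qed.

Lemma dist_addl_le p t W : p \in W -> dist (p + t) W <= enorm t.
Proof. by move=> pW; apply: le_trans (dist_le_enorm _ pW) _; rewrite addrAC subrr add0r. Qed.

Lemma sumr_const_fset S (c : R) : \sum_(x <- S) c = (#|` S|)%:R * c.
Proof.
by rewrite card_fset_sum1 natr_sum mulr_suml; apply: eq_bigr => x _; rewrite mul1r.
Qed.

Lemma pca_cost_le_card S W (c : R) :
  (forall x, x \in S -> dist x W <= c) -> pca_cost S W <= (#|` S|)%:R * c ^+ 2.
Proof.
move=> Sc; rewrite /pca_cost -sumr_const_fset big_seq [leRHS]big_seq.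
apply: ler_sum => x xS; rewrite !expr2.
by apply: ler_pM; rewrite ?dist_ge0 ?Sc.
Qed.

Lemma card_far_le_pca_cost S W (r : R) : 0 <= r ->
  (#|` [fset x in S | ~~ (dist x W <= r)]|)%:R * r ^+ 2 <= pca_cost S W.
Proof.
move=> r0; set F := [fset x in S | _].
apply: (@le_trans _ _ (\sum_(x <- F) dist x W ^+ 2)).
  rewrite -sumr_const_fset big_seq [leRHS]big_seq.
  apply: ler_sum => x; rewrite inE => /andP[_]; rewrite -ltNge => /ltW rx.
  by rewrite !expr2 ler_pM.
rewrite /pca_cost [leRHS](big_fsetID _ (fun x => ~~ (dist x W <= r))) /= lerDl.
by apply: sumr_ge0 => x _; exact: sqr_ge0.
Qed.

Lemma card_far_pca_le_half (k : nat) U W S (alpha : R) :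
  0 < alpha -> \dim U = k -> is_pca k S W ->
  (forall x, x \in S -> dist x U <= alpha) ->
  (2 * #|` [fset x in S | ~~ (dist x W <= Num.sqrt 2 * alpha)%R]| <= #|` S|)%N.
Proof.
move=> alpha_gt0 dimU [_ pca_min] SU.
have r2 : (Num.sqrt 2 * alpha) ^+ 2 = 2 * alpha ^+ 2 by rewrite exprMn sqr_sqrtr.
have := card_far_le_pca_cost S W (mulr_ge0 (sqrtr_ge0 2) (ltW alpha_gt0)).
move=> /le_trans /(_ (pca_min U dimU)) /le_trans /(_ (pca_cost_le_card SU)).
by rewrite r2 mulrA -natrM mulnC ler_pM2r ?exprn_gt0 // ler_nat.
Qed.

End PCAHalving.

Lemma pca_run_card_halves (R : realType) (d k : nat) (alpha : R)
    (U : {vspace 'rV[R]_d}) (P0 : {fset 'rV[R]_d})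
    (S : nat -> {fset 'rV[R]_d}) (W : nat -> {vspace 'rV[R]_d}) :
  0 < alpha -> \dim U = k -> (forall x, x \in P0 -> dist x U <= alpha) ->
  pca_run k alpha P0 S W ->
  forall j, (forall m, (m < j)%N -> S m != fset0) ->
  S j `<=` P0 /\ (#|` S j| * 2 ^ j <= #|` P0|)%N.
Proof.
move=> alpha_gt0 dimU P0U [S0 run]; elim=> [|j IHj] nonempty.
  by rewrite S0 muln1.
have [SjP0 card_Sj] := IHj (fun m lt_mj => nonempty m (ltnW lt_mj)).
have [pca_j ->] := run j (nonempty j (ltnSn j)).
have SjU x : x \in S j -> dist x U <= alpha by move=> /(fsubsetP SjP0); exact: P0U.
split; first by apply: fsubset_trans SjP0; apply/fsubsetP => x; rewrite inE => /andP[].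
apply: leq_trans card_Sj; rewrite expnS mulnCA mulnA leq_mul2r.
by rewrite (card_far_pca_le_half alpha_gt0 dimU pca_j SjU) orbT.
Qed.

Lemma eq0_mul_expn_trunc_log (b n m : nat) :
  (1 < b)%N -> (m * b ^ (trunc_log b n).+1 <= n)%N -> m = 0%N.
Proof.
move=> b_gt1; case: m => // m /leq_ltn_trans /(_ (trunc_log_ltn n b_gt1)).
by rewrite mulSn ltnNge leq_addr.
Qed.

Theorem claim3p3 :
  exists C : nat,
  forall (R : realType) (d k n : nat) (U : {vspace 'rV[R]_d})
         (p t : 'I_n -> 'rV[R]_d) (alpha : R),
    \dim U = k ->
    injective p ->
    (forall i, p i \in U) ->
    0 < alpha ->
    (forall i, enorm (t i) <= alpha) ->
    forall (S : nat -> {fset 'rV[R]_d}) (W : nat -> {vspace 'rV[R]_d}),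
      pca_run k alpha [fset (p i + t i)%R | i : 'I_n] S W ->
      exists m : nat, (m <= C * (trunc_log 2 n).+1)%N /\ S m = fset0.
Proof.
exists 1%N => R d k n U p t alpha dimU _ pU alpha_gt0 t_le S W run.
rewrite mul1n; set L := (trunc_log 2 n).+1; set P0 := [fset _ | _ : 'I_n] in run.
have card_P0 : (#|` P0| <= n)%N.
  by apply: leq_trans (leq_imfset_card _ _ _) _; rewrite /= size_enum_ord.
have P0U x : x \in P0 -> dist x U <= alpha.
  by case/imfsetP => i _ ->; apply: le_trans (dist_addl_le (t i) (pU i)) (t_le i).
have [/existsP[m /eqP Sm]|] := boolP [exists m : 'I_L.+1, S m == fset0].
  by exists m; rewrite -ltnS ltn_ord Sm.
rewrite negb_exists => /forallP nonempty.
have [_ card_SL] := pca_run_card_halves alpha_gt0 dimU P0U run (j := L)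
  (fun m lt_mL => nonempty (Ordinal (leqW lt_mL))).
exists L; split => //; apply: cardfs0_eq.
exact: eq0_mul_expn_trunc_log (isT : (1 < 2)%N) (leq_trans card_SL card_P0).
Qed.
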